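(* Let $R$ and $Q$ be rod sets. (a) There exist a rod set $R'\equiv R$ and an expansion subtree $\mathsf T$ of $\mathrm{Tree}(R')$ with $\langle\mathrm{Inner}(\mathsf T)\rangle\equiv Q$. (b) For any rod set $R'\equiv R$ and any expansion subtree $\mathsf T$ of $\mathrm{Tree}(R')$ with $\langle\mathrm{Inner}(\mathsf T)\rangle\equiv Q$, one has $$\langle\mathrm{Leaves}(\mathsf T)\rangle\equiv R\cup\overline{Q}\cup QR .$$
   Context: A rod is a triple $(r,c,\varepsilon)$ with $r$ a positive integer (length), $c$ a tag (color) and $\varepsilon\in\{\pm1\}$ (sign); rods of sign $-1$ are antirods. A rod set is a set of rods with finitely many rods of each length. $C(n,R)$ is the number of positive rods of length $n$ in $R$ minus the number of antirods of length $n$. Rod sets $R,S$ are equivalent, $R\equiv S$, if $C(n,R)=C(n,S)$ for all $n>0$ (equivalently, one is obtained from the other by adding/deleting pairs consisting of a rod and an antirod of the same length). Unions of rod sets are disjoint (multiset) unions; $\overline{Q}$ is $Q$ with all signs reversed; the concatenation $QR$ is the rod set with one rod for each pair $(q,r)\in Q\times R$, of length $\operatorname{len}(q)+\operatorname{len}(r)$ and sign $\operatorname{sign}(q)\operatorname{sign}(r)$. A train built from $R$ is a finite sequence of rods of $R$ (the empty train is $\Lambda$), with length the sum of lengths and sign the product of signs; for a set $X$ of trains, $\langle X\rangle$ is the rod set with one rod, of the same length and sign, for each nonempty train in $X$. $\mathrm{Tree}(R)$ is the rooted tree with nodes the trains built from $R$, root $\Lambda$, and children of $\tau$ the trains $\tau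 k$, $k\in R$ (one per rod). An expansion subtree $\mathsf T$ is a rooted subtree containing all children of the root, and containing all children of any node of which it contains at least one child; $\mathrm{Inner}(\mathsf T)$ is the set of non-root nodes with children in $\mathsf T$, $\mathrm{Leaves}(\mathsf T)$ the set of nodes of $\mathsf T$ without children in $\mathsf T$. *)

From mathcomp Require Import all_boot.
From mathcomp Require Import ssralg ssrint.
From mathcomp Require Import boolp.
Set Implicit Arguments. Unset Strict Implicit. Unset Printing Implicit Defensive.

(* A rod set: for each length n > 0, the finite list of signs of its rods of
   length n (true = +1 rod, false = -1 antirod).  The rods of length n are
   the pairs (n, i) with i < size (R n); the index i plays the role of the tag
   (colour).  The value R 0 is irrelevant (there are no rods of length 0). *)
Definition rodset := nat -> seq bool.

Definition rod := (nat * nat)%type.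

Definition is_rod (R : rodset) (k : rod) : bool := (0 < k.1) && (k.2 < size (R k.1)).
Definition rod_sign (R : rodset) (k : rod) : bool := nth true (R k.1) k.2.

Definition C (n : nat) (R : rodset) : int :=
  (count id (R n))%:Z - (count negb (R n))%:Z.

Definition rod_equiv (R S : rodset) : Prop := forall n, 0 < n -> C n R = C n S.

Definition rod_union (R S : rodset) : rodset := fun n => R n ++ S n.
Definition rod_bar (Q : rodset) : rodset := fun n => map negb (Q n).
Definition rod_concat (Q R : rodset) : rodset := fun n =>
  flatten [seq [seq (s1 == s2) | s1 <- Q a, s2 <- R (n - a)] | a <- iota 1 n.-1].

Definition train := seq rod.
Definition is_train (R : rodset) (t : train) : bool := all (is_rod R) t.
Definition train_len (t : train) : nat := sumn (map fst t).
Definition train_sign (R : rodset) (t : train) : bool :=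
  foldr (fun k b => rod_sign R k == b) true t.

Fixpoint trains_fuel (R : rodset) (f n : nat) : seq train :=
  if n == 0 then [:: [::]] else
  match f with
  | 0 => [::]
  | f'.+1 => flatten [seq [seq (a, i) :: t | i <- iota 0 (size (R a)),
                                             t <- trains_fuel R f' (n - a)]
                     | a <- iota 1 n]
  end.
Definition trains_of_len (R : rodset) (n : nat) : seq train := trains_fuel R n n.

(* <X> : one rod per nonempty train of X (X a set of trains built from R) *)
Definition rods_of (R : rodset) (X : train -> Prop) : rodset := fun n =>
  [seq train_sign R t | t <- trains_of_len R n & `[< X t >]].

(* expansion subtrees of Tree(R); children of t are rcons t k, k a rod of R *)
Definition expansion_subtree (R : rodset) (T : train -> Prop) : Prop :=
  [/\ (forall t, T t -> is_train R t),
      T [::],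
      (forall t k, T (rcons t k) -> T t),
      (forall k, is_rod R k -> T [:: k]) &
      (forall t k k', T (rcons t k) -> is_rod R k' -> T (rcons t k'))].

Definition Inner (T : train -> Prop) : train -> Prop :=
  fun t => [/\ T t, t <> [::] & exists k, T (rcons t k)].
Definition Leaves (T : train -> Prop) : train -> Prop :=
  fun t => T t /\ forall k, ~ T (rcons t k).

(* Every non-root node of an expansion subtree of Tree(R') is either a child of the
   root, i.e. a rod of R', or the child t k of an inner node t, and then all the
   children t k' (k' in R') are in the tree.  Counting the nodes of length n with
   signs therefore gives C(n, R') + sum_a C(a, Q) C(n - a, R'); the nodes of length
   n that are not inner are exactly the leaves, whence (b) once C(n, Q) is removed.
   For (a), take R' = R u Q u Qbar and the tree made of the root, all single rods,
   and all two-rod trains starting with a rod of the copy of Q: its inner nodes are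
   exactly that copy of Q. *)

From mathcomp Require Import all_boot ssralg ssrint boolp zify ring.
Set Implicit Arguments. Unset Strict Implicit. Unset Printing Implicit Defensive.

Lemma uniq_flatten_map (A B : eqType) (f : A -> seq B) (g : B -> A) (s : seq A) :
  uniq s -> (forall a, uniq (f a)) -> (forall a x, x \in f a -> g x = a) ->
  uniq (flatten (map f s)).
Proof.
move=> uniq_s uniq_f fK; elim: s uniq_s => [|a s IHs] //= /andP[a_notin_s uniq_s].
rewrite cat_uniq uniq_f IHs // andbT.
apply/hasP => -[x /flattenP[_ /mapP[b b_in_s ->] x_in_fb] x_in_fa].
by move: a_notin_s; rewrite -(fK _ _ x_in_fa) (fK _ _ x_in_fb) b_in_s.
Qed.

Lemma train_len_cons k t : train_len (k :: t) = k.1 + train_len t.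
Proof. by []. Qed.

Lemma train_len1 k : train_len [:: k] = k.1.
Proof. exact: addn0. Qed.

Lemma train_len_rcons t k : train_len (rcons t k) = train_len t + k.1.
Proof. by rewrite /train_len map_rcons -cats1 sumn_cat /= addn0. Qed.

Section Trains.

Variable R : rodset.

Lemma is_train1 k : is_train R [:: k] = is_rod R k.
Proof. exact: andbT. Qed.

Lemma is_train_rcons t k : is_train R (rcons t k) = is_train R t && is_rod R k.
Proof. by rewrite /is_train all_rcons andbC. Qed.

Lemma train_len_eq0 t : is_train R t -> (train_len t == 0) = (t == [::]).
Proof. by case: t => [|k t] //= /andP[/andP[k_gt0 _] _]; rewrite addn_eq0 eqn0Ngt k_gt0. Qed.

Lemma mem_trains_fuel f n t : n <= f ->
  (t \in trains_fuel R f n) = is_train R t && (train_len t == n).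
Proof.
have mem_nil t' : (t' \in [:: [::]]) = is_train R t' && (train_len t' == 0).
  by rewrite inE; case: (boolP (is_train R t')) => [/train_len_eq0 -> | ]; last case: t'.
elim: f n t => [|f IHf] n t; first by rewrite leqn0 => /eqP -> /=; exact: mem_nil.
move=> n_le_f /=; case: eqP => [-> | /eqP n_neq0]; first exact: mem_nil.
apply/flattenP/andP => [[_ /mapP[a a_in ->]] | [t_train /eqP len_t]].
  move: a_in; rewrite mem_iota => /andP[a_gt0 a_le_n] /allpairsPdep[i [t' [i_lt t'_in ->]]].
  rewrite IHf in t'_in; last by lia.
  move: i_lt t'_in; rewrite mem_iota /= => i_lt /andP[t'_train /eqP len_t'].
  by rewrite train_len_cons /is_rod /= a_gt0 i_lt t'_train; split=> //; apply/eqP; lia.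
case: t t_train len_t => [|[a i] t]; first by move=> _ len_t; case/eqP: n_neq0.
rewrite train_len_cons => /andP[/andP[/= a_gt0 i_lt] t_train] len_t.
exists [seq (a, i0) :: t0 | i0 <- iota 0 (size (R a)), t0 <- trains_fuel R f (n - a)].
  by apply/mapP; exists a; rewrite // mem_iota a_gt0 /=; lia.
apply/allpairsPdep; exists i, t; rewrite mem_iota IHf; last by lia.
by split=> //; apply/andP; split; [exact: t_train | apply/eqP; lia].
Qed.

Lemma uniq_trains_fuel f n : uniq (trains_fuel R f n).
Proof.
elim: f n => [|f IHf] n /=; first by case: eqP.
case: eqP => // _; apply: (uniq_flatten_map (g := fun t => (head (0, 0) t).1)).
- exact: iota_uniq.
- by move=> a; apply: allpairs_uniq => [||[? ?] [? ?] _ _ [-> ->]]; rewrite ?iota_uniq.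
- by move=> a _ /allpairsPdep[i [t [_ _ ->]]].
Qed.

Lemma mem_trains n t : (t \in trains_of_len R n) = is_train R t && (train_len t == n).
Proof. exact: mem_trains_fuel. Qed.

Lemma uniq_trains n : uniq (trains_of_len R n).
Proof. exact: uniq_trains_fuel. Qed.

Definition rods_of_len m : seq rod := [seq (m, i) | i <- iota 0 (size (R m))].

Lemma mem_rods_of_len m k : (k \in rods_of_len m) = (k.1 == m) && (k.2 < size (R m)).
Proof.
case: k => a i; apply/mapP/andP => [[j] | [/eqP /= -> i_lt]].
  by rewrite mem_iota => /andP[_ j_lt] [-> ->].
by exists i; rewrite // mem_iota.
Qed.

Lemma uniq_rods_of_len m : uniq (rods_of_len m).
Proof. by rewrite map_inj_uniq ?iota_uniq // => i j [->]. Qed.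

End Trains.

Section ExpansionSubtree.

Variables (R : rodset) (T : train -> Prop).

Definition nodes_by_parent n : seq train :=
  [seq [:: k] | k <- rods_of_len R n] ++
  flatten [seq [seq rcons p k | p <- [seq p <- trains_of_len R a | `[< Inner T p >]],
                                k <- rods_of_len R (n - a)]
          | a <- iota 1 n.-1].

Lemma uniq_nodes_by_parent n : uniq (nodes_by_parent n).
Proof.
rewrite cat_uniq map_inj_uniq ?uniq_rods_of_len //; last by move=> k k' [].
rewrite (uniq_flatten_map (g := fun t => train_len t - (last (0, 0) t).1)) ?iota_uniq //.
- rewrite andbT; apply/hasP => -[_ /flattenP[_ /mapP[a _ ->]] /allpairsPdep[p [k [p_in _ ->]]]].
  case/mapP=> k' _ /(congr1 size); rewrite size_rcons; case=> /eqP; rewrite size_eq0.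
  by move: p_in; rewrite mem_filter => /andP[/asboolP[_ p_neq_nil _] _] /eqP.
- move=> a; apply: allpairs_uniq; rewrite ?filter_uniq ?uniq_trains ?uniq_rods_of_len //.
  by move=> [p k] [p' k'] _ _ /rcons_inj[-> ->].
- move=> a _ /allpairsPdep[p [k [p_in _ ->]]].
  rewrite train_len_rcons last_rcons addnK.
  by move: p_in; rewrite mem_filter mem_trains => /andP[_ /andP[_ /eqP]].
Qed.

Hypothesis T_subtree : expansion_subtree R T.

Lemma mem_nodes_by_parent n t : 0 < n ->
  (t \in nodes_by_parent n) = `[< T t >] && (t \in trains_of_len R n).
Proof.
case: T_subtree => T_train _ T_parent T_root T_sibling n_gt0.
rewrite mem_trains mem_cat; apply/idP/idP.
  case/orP=> [/mapP[k] | /flattenP[r /mapP[a]]].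
    rewrite mem_rods_of_len => /andP[/eqP k1 k2] ->.
    have k_rod : is_rod R k by rewrite /is_rod k1 n_gt0.
    by rewrite (asboolT (T_root _ k_rod)) is_train1 k_rod train_len1 k1 eqxx.
  rewrite mem_iota => /andP[a_gt0 a_lt] -> /allpairsPdep[p [k [p_in k_in ->]]].
  move: p_in k_in; rewrite mem_filter mem_trains mem_rods_of_len.
  case/andP=> /asboolP[Tp _ [k0 Tpk0]] /andP[p_train /eqP len_p] /andP[/eqP k1 k2].
  have k_rod : is_rod R k by rewrite /is_rod k1 k2 andbT; lia.
  rewrite (asboolT (T_sibling _ _ _ Tpk0 k_rod)) is_train_rcons p_train k_rod.
  by rewrite train_len_rcons len_p k1 /=; apply/eqP; lia.
case/andP=> /asboolP Tt /andP[_ /eqP len_t].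
case/lastP: t Tt len_t => [|p k] Tt; first by move=> len0; rewrite -len0 in n_gt0.
have := T_train _ Tt; rewrite is_train_rcons train_len_rcons => /andP[p_train k_rod] len_pk.
case: (altP (p =P [::])) => [p_nil | p_neq_nil].
  rewrite p_nil in len_pk *; apply/orP; left; apply/mapP; exists k => //.
  by rewrite mem_rods_of_len -len_pk eqxx; case/andP: k_rod.
apply/orP; right; apply/flattenP.
exists [seq rcons p' k' | p' <- [seq p' <- trains_of_len R (train_len p) | `[< Inner T p' >]],
                          k' <- rods_of_len R (n - train_len p)].
  apply/mapP; exists (train_len p) => //; rewrite mem_iota.
  by move: (k_rod) (p_neq_nil); rewrite -(train_len_eq0 p_train) /is_rod; lia.
apply/allpairsPdep; exists p, k; split=> //.
  rewrite mem_filter mem_trains p_train eqxx !andbT; apply/asboolP.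
  by split; [exact: T_parent Tt | exact/eqP | exists k].
by rewrite mem_rods_of_len -len_pk addKn eqxx; case/andP: k_rod.
Qed.

End ExpansionSubtree.

Import GRing.Theory.
Local Open Scope ring_scope.

Definition bsign (b : bool) : int := if b then 1 else -1.

Lemma bsign_eqb x y : bsign (x == y) = bsign x * bsign y.
Proof. by case: x; case: y. Qed.

Lemma bsign_train_sign R t :
  bsign (train_sign R t) = \prod_(k <- t) bsign (rod_sign R k).
Proof. by elim: t => [|k t IHt]; rewrite ?big_nil // big_cons -IHt bsign_eqb. Qed.

Lemma C_sum n R : C n R = \sum_(b <- R n) bsign b.
Proof.
rewrite /C; elim: (R n) => [|b s IHs]; first by rewrite big_nil.
by rewrite big_cons -IHs; case: b; rewrite /= !PoszD; ring.
Qed.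

Lemma C_rods_of R X n :
  C n (rods_of R X) = \sum_(t <- trains_of_len R n | `[< X t >]) bsign (train_sign R t).
Proof. by rewrite C_sum big_map big_filter. Qed.

Lemma sum_rods_of_len R m : \sum_(k <- rods_of_len R m) bsign (rod_sign R k) = C m R.
Proof. by rewrite C_sum big_map (big_nth true) /index_iota subn0. Qed.

Lemma C_union n R S : C n (rod_union R S) = C n R + C n S.
Proof. by rewrite !C_sum big_cat. Qed.

Lemma C_bar n Q : C n (rod_bar Q) = - C n Q.
Proof. by rewrite !C_sum big_map -sumrN; apply: eq_bigr => -[]. Qed.

Lemma C_concat n Q R :
  C n (rod_concat Q R) = \sum_(a <- iota 1 n.-1) C a Q * C (n - a)%N R.
Proof.
rewrite C_sum big_flatten big_map; apply: eq_bigr => a _.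
rewrite big_allpairs_dep !C_sum mulr_suml; apply: eq_bigr => b _.
by rewrite mulr_sumr; apply: eq_bigr => b' _; rewrite bsign_eqb.
Qed.

Lemma C_Leaves R T n : (0 < n)%N ->
  C n (rods_of R (Leaves T)) = C n (rods_of R T) - C n (rods_of R (Inner T)).
Proof.
move=> n_gt0; rewrite !C_rods_of [LHS]big_mkcond.
rewrite [X in X - _]big_mkcond [X in _ - X]big_mkcond -sumrB.
apply: eq_big_seq => t; rewrite mem_trains => /andP[_ /eqP len_t].
have t_neq_nil : t <> [::] by move=> t_nil; rewrite -len_t t_nil in n_gt0.
have [Tt | nTt] := asboolP (T t); last first.
  by rewrite !asboolF ?subr0 // => [[] | []].
have [It | nIt] := asboolP (Inner T t).
  by rewrite asboolF ?subrr // => -[_ leaf_t]; case: It => _ _ [k /leaf_t].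
by rewrite asboolT ?subr0 //; split=> // k Ttk; apply: nIt; split=> //; exists k.
Qed.

Lemma C_expansion_subtree R T n : expansion_subtree R T -> (0 < n)%N ->
  C n (rods_of R T) =
  C n R + \sum_(a <- iota 1 n.-1) C a (rods_of R (Inner T)) * C (n - a)%N R.
Proof.
move=> T_subtree n_gt0.
have perm_nodes : perm_eq [seq t <- trains_of_len R n | `[< T t >]] (nodes_by_parent R T n).
  apply: uniq_perm; rewrite ?filter_uniq ?uniq_trains ?uniq_nodes_by_parent // => t.
  by rewrite mem_filter mem_nodes_by_parent.
rewrite C_rods_of -big_filter (perm_big _ perm_nodes) big_cat big_map /= -sum_rods_of_len.
under eq_bigr do rewrite eqb_id.
congr (_ + _); rewrite big_flatten big_map; apply: eq_bigr => a _.
rewrite big_allpairs_dep big_filter C_rods_of mulr_suml; apply: eq_bigr => p _.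
rewrite -sum_rods_of_len mulr_sumr; apply: eq_bigr => k _.
by rewrite !bsign_train_sign big_rcons.
Qed.

Lemma rods_of_Leaves_equiv R Q R' T :
  rod_equiv R' R -> expansion_subtree R' T -> rod_equiv (rods_of R' (Inner T)) Q ->
  rod_equiv (rods_of R' (Leaves T)) (rod_union (rod_union R (rod_bar Q)) (rod_concat Q R)).
Proof.
move=> eqR' T_subtree eqQ n n_gt0.
rewrite C_Leaves // C_expansion_subtree // !C_union C_bar C_concat eqR' // eqQ //.
have -> : \sum_(a <- iota 1 n.-1) C a (rods_of R' (Inner T)) * C (n - a)%N R' =
          \sum_(a <- iota 1 n.-1) C a Q * C (n - a)%N R.
  by apply: eq_big_seq => a; rewrite mem_iota => /andP[a_gt0 a_lt]; rewrite eqQ // eqR' //; lia.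
ring.
Qed.

Section Graft.

Variables R Q : rodset.

Definition graft_rods : rodset := rod_union R (rod_union Q (rod_bar Q)).

(* The rods of length m of graft_rods are indexed along R m ++ Q m ++ Qbar m. *)
Definition in_Q_copy (k : rod) : bool :=
  (size (R k.1) <= k.2 < size (R k.1) + size (Q k.1))%N.

Definition graft_tree (t : train) : Prop :=
  is_train graft_rods t /\ ((size t <= 1)%N \/ size t = 2%N /\ in_Q_copy (head (0, 0) t)).

Lemma graft_rods_equiv : rod_equiv graft_rods R.
Proof. by move=> n _; rewrite !C_union C_bar addrN addr0. Qed.

Lemma expansion_subtree_graft : expansion_subtree graft_rods graft_tree.
Proof.
split=> [t [] // | | t k [] | k k_rod | t k k' []]; first by split=> //; left.
- by rewrite is_train_rcons size_rcons => /andP[t_train _] size_t; split=> //; left; lia.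
- by split; [rewrite is_train1 | left].
rewrite is_train_rcons size_rcons => /andP[t_train _] size_t k'_rod.
split; first by rewrite is_train_rcons t_train k'_rod.
by rewrite size_rcons; case: size_t => [|[size_t Qt]]; [left | right; case: t {t_train} size_t Qt].
Qed.

Lemma Inner_graftP t :
  Inner graft_tree t <-> exists2 k, t = [:: k] & is_rod graft_rods k && in_Q_copy k.
Proof.
split=> [[[t_train _] t_neq_nil [k [_]]] | [k -> /andP[k_rod k_Q]]].
  rewrite size_rcons; case=> [|[]]; first by case: t t_neq_nil {t_train}.
  case: t t_neq_nil t_train => [|k0 [|//]] //= _ /andP[k0_rod _] _ k0_Q.
  by exists k0; rewrite ?k0_rod.
have k_train : is_train graft_rods [:: k] by rewrite is_train1.
split=> //; first by split=> //; left.
by exists k; split; [rewrite is_train_rcons k_train | right].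
Qed.

Lemma rods_of_Inner_graft : rod_equiv (rods_of graft_rods (Inner graft_tree)) Q.
Proof.
move=> n n_gt0; pose Q_copy := [seq [:: (n, size (R n) + j)%N] | j <- iota 0 (size (Q n))].
have perm_inner :
    perm_eq [seq t <- trains_of_len graft_rods n | `[< Inner graft_tree t >]] Q_copy.
  apply: uniq_perm; rewrite ?filter_uniq ?uniq_trains //.
    by rewrite map_inj_uniq ?iota_uniq // => j j' [/addnI].
  move=> t; rewrite mem_filter mem_trains; apply/andP/mapP => [[] | [j]].
    case/asboolP/Inner_graftP=> -[a i] -> /andP[_ /andP /= [R_le_i i_lt]].
    rewrite train_len1 => /andP[_ /eqP <-].
    by exists (i - size (R a))%N; rewrite ?mem_iota ?subnKC //=; lia.
  rewrite mem_iota => /andP[_ j_lt] ->.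
  have k_rod : is_rod graft_rods (n, size (R n) + j)%N.
    by rewrite /is_rod /= n_gt0 !size_cat; lia.
  split; last by rewrite is_train1 k_rod train_len1 eqxx.
  apply/asboolP/Inner_graftP; exists (n, size (R n) + j)%N => //.
  by rewrite k_rod /in_Q_copy /=; lia.
rewrite C_rods_of -big_filter (perm_big _ perm_inner) big_map C_sum (big_nth true).
rewrite /index_iota subn0; apply: eq_big_seq => j; rewrite mem_iota => /andP[_ j_lt].
by rewrite bsign_train_sign big_seq1 /rod_sign /= nth_cat ltnNge leq_addr addKn nth_cat j_lt.
Qed.

End Graft.

Theorem mainTheorem5 (R Q : rodset) :
  (exists (R' : rodset) (T : train -> Prop),
      [/\ rod_equiv R' R, expansion_subtree R' T &
          rod_equiv (rods_of R' (Inner T)) Q]) /\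
  (forall (R' : rodset) (T : train -> Prop),
      rod_equiv R' R -> expansion_subtree R' T ->
      rod_equiv (rods_of R' (Inner T)) Q ->
      rod_equiv (rods_of R' (Leaves T))
                (rod_union (rod_union R (rod_bar Q)) (rod_concat Q R))).
Proof.
split; last exact: rods_of_Leaves_equiv.
exists (graft_rods R Q), (graft_tree R Q); split.
- exact: graft_rods_equiv.
- exact: expansion_subtree_graft.
- exact: rods_of_Inner_graft.
Qed.
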